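(* Let $G$ be a finite group, $S\le G$ a subgroup and $B$ an $S$-Galois algebra over a field $k$ which is simple as an algebra. Then the sequence $1\to\mathrm{Aut}_S(B)\xrightarrow{\mathrm{Ind}}\mathrm{Aut}_G(\mathrm{Ind}_S^G(B))\xrightarrow{\pi}N_G(S)/S$ is exact. Moreover, the sequence $1\to\mathrm{Aut}_S(B)\to\mathrm{Aut}_G(\mathrm{Ind}_S^G(B))\to N_G(S)/S\to1$ is exact if and only if $B\cong B^{(g)}$ as $S$-algebras for all $g\in N_G(S)$.
   Context: An $S$-algebra is a $k$-algebra with $S$ acting by algebra automorphisms; $\mathrm{Aut}_S(B)$ = $S$-equivariant algebra automorphisms. An $S$-Galois algebra is a nonzero $S$-algebra $B$ with $B^S=k$ and $B\otimes_kB\to\prod_{s\in S}B$, $x\otimes y\mapsto(x(s\cdot y))_s$, bijective. $\mathrm{Ind}_S^G(B)=\{r:G\to B\mid r(sg)=s\cdot r(g)\ \forall s\in S,g\in G\}$ with pointwise operations and $(g\cdot r)(x)=r(xg)$. The map $\mathrm{Ind}$ sends $f\in\mathrm{Aut}_S(B)$ to $r\mapsto f\circ r$. For a right coset $Sg$, $\chi_{Sg}\in\mathrm{Ind}_S^G(B)$ is the function equal to $1$ on $Sg$ and $0$ elsewhere; since $B$ is simple these are exactly the central primitive idempotents of $\mathrm{Ind}_S^G(B)$, and $\pi(F)=Sg$ where $Sg$ is the coset with $F(\chi_S)=\chi_{Sg}$; this defines a group homomorphism $\pi:\mathrm{Aut}_G(\mathrm{Ind}_S^G(B))\to N_G(S)/S$.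 For $g\in N_G(S)$, $B^{(g)}$ is $B$ with the $S$-action $h\cdot_g b=(ghg^{-1})\cdot b$. *)

From HB Require Import structures.
From mathcomp Require Import all_boot all_order all_algebra all_fingroup.
Set Implicit Arguments. Unset Strict Implicit. Unset Printing Implicit Defensive.
Import GRing.Theory.
Local Open Scope ring_scope.

(* G is the whole finite group gT; S : {group gT}. B : algType k (a k-algebra).
   An S-action on B is a function act : gT -> B -> B (only its values on S matter). *)

Definition alg_auto (k : fieldType) (B : algType k) (f : B -> B) : Prop :=
  [/\ (forall x y, f (x + y)%R = (f x + f y)%R),
      (forall x y, f (x * y)%R = (f x * f y)%R),
      f 1%R = 1%R,
      (forall (c : k) x, f (c *: x) = c *: f x)
    & bijective f].

Definition S_algebra (k : fieldType) (B : algType k) (gT : finGroupType)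
  (S : {group gT}) (act : gT -> B -> B) : Prop :=
  [/\ (forall s, s \in S -> alg_auto (act s)),
      (forall b, act 1%g b = b)
    & (forall s t b, s \in S -> t \in S -> act (s * t)%g b = act s (act t b))].

Definition bilinear_form (k : fieldType) (B : algType k) (beta : B -> B -> k) : Prop :=
  (forall (c : k) x1 x2 y, beta (c *: x1 + x2)%R y = (c * beta x1 y + beta x2 y)%R) /\
  (forall (c : k) x y1 y2, beta x (c *: y1 + y2)%R = (c * beta x y1 + beta x y2)%R).

(* The map B (x)_k B -> prod_{s in S} B, x(x)y |-> (x (s.y))_s,
   is bijective.  Surjectivity: every family (v_s)_{s in S} is the image of a finite
   sum of pure tensors.  Injectivity: if sum_i x_i (s.y_i) = 0 for all s in S, then
   sum_i x_i (x) y_i = 0 in B (x)_k B, i.e. (since over a field the dual of B(x)B is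
   the space of bilinear forms, and it separates points) every bilinear form
   vanishes on sum_i (x_i, y_i). *)
Definition S_Galois (k : fieldType) (B : algType k) (gT : finGroupType)
  (S : {group gT}) (act : gT -> B -> B) : Prop :=
  [/\ (1 : B) != 0,
      S_algebra S act,
      (forall b : B, (forall s, s \in S -> act s b = b) <-> exists c : k, b = c%:A),
      (forall v : {ffun gT -> B}, exists l : seq (B * B),
          forall s, s \in S -> v s = (\sum_(p <- l) p.1 * act s p.2)%R)
    & (forall l : seq (B * B),
          (forall s, s \in S -> (\sum_(p <- l) p.1 * act s p.2)%R = 0) ->
          forall beta : B -> B -> k, bilinear_form beta ->
            (\sum_(p <- l) beta p.1 p.2)%R = 0)].

Definition two_sided_ideal (k : fieldType) (B : algType k) (I : B -> Prop) : Prop :=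
  [/\ I 0, (forall x y, I x -> I y -> I (x + y)%R),
      (forall a x, I x -> I (a * x)%R) & (forall a x, I x -> I (x * a)%R)].

Definition simple_algebra (k : fieldType) (B : algType k) : Prop :=
  (1 : B) != 0 /\
  forall I : B -> Prop, two_sided_ideal I -> (forall x, I x -> x = 0) \/ (forall x, I x).

Definition AutS (k : fieldType) (B : algType k) (gT : finGroupType)
  (S : {group gT}) (act : gT -> B -> B) (f : B -> B) : Prop :=
  alg_auto f /\ forall s b, s \in S -> f (act s b) = act s (f b).

Definition inInd (k : fieldType) (B : algType k) (gT : finGroupType)
  (S : {group gT}) (act : gT -> B -> B) (r : {ffun gT -> B}) : Prop :=
  forall s g, s \in S -> r (s * g)%g = act s (r g).

Definition gact (B : Type) (gT : finGroupType) (g : gT) (r : {ffun gT -> B}) :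
  {ffun gT -> B} := [ffun x => r (x * g)%g].

Definition AutG (k : fieldType) (B : algType k) (gT : finGroupType)
  (S : {group gT}) (act : gT -> B -> B)
  (F : {ffun gT -> B} -> {ffun gT -> B}) : Prop :=
  (forall r, inInd S act r -> inInd S act (F r)) /\
  (forall r1 r2, inInd S act r1 -> inInd S act r2 -> F r1 = F r2 -> r1 = r2) /\
  (forall r', inInd S act r' -> exists2 r, inInd S act r & F r = r') /\
  (forall r1 r2, inInd S act r1 -> inInd S act r2 ->
     F [ffun x => (r1 x + r2 x)%R] = [ffun x => (F r1 x + F r2 x)%R]) /\
  (forall r1 r2, inInd S act r1 -> inInd S act r2 ->
     F [ffun x => (r1 x * r2 x)%R] = [ffun x => (F r1 x * F r2 x)%R]) /\
  F [ffun _ => 1%R] = [ffun _ => 1%R] /\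
  (forall (c : k) r, inInd S act r -> F [ffun x => c *: r x] = [ffun x => c *: F r x]) /\
  (forall g r, inInd S act r -> F (gact g r) = gact g (F r)).

Definition Ind_map (B : Type) (gT : finGroupType) (f : B -> B) (r : {ffun gT -> B}) :
  {ffun gT -> B} := [ffun x => f (r x)].

Definition chi (k : fieldType) (B : algType k) (gT : finGroupType) (A : {set gT}) :
  {ffun gT -> B} := [ffun x => if x \in A then 1%R else 0%R].

(* pi(F) = Sg  iff  F(chi_S) = chi_{Sg} *)
Definition pi_is (k : fieldType) (B : algType k) (gT : finGroupType) (S : {group gT})
  (F : {ffun gT -> B} -> {ffun gT -> B}) (g : gT) : Prop :=
  F (chi B S) = chi B (S :* g)%g.

Definition exact_left (k : fieldType) (B : algType k) (gT : finGroupType)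
  (S : {group gT}) (act : gT -> B -> B) : Prop :=
  (forall f1 f2, AutS S act f1 -> AutS S act f2 ->
     (forall r, inInd S act r -> Ind_map f1 r = Ind_map f2 r) -> f1 =1 f2) /\
  (forall F, AutG S act F ->
     (pi_is S F 1%g <-> exists2 f, AutS S act f & forall r, inInd S act r -> F r = Ind_map f r)).

Definition pi_surjective (k : fieldType) (B : algType k) (gT : finGroupType)
  (S : {group gT}) (act : gT -> B -> B) : Prop :=
  forall g, g \in 'N(S)%g -> exists2 F, AutG S act F & pi_is S F g.

Definition twist (B : Type) (gT : finGroupType) (act : gT -> B -> B) (g : gT) :
  gT -> B -> B := fun h b => act (g * h * g^-1)%g b.

Definition S_alg_iso (k : fieldType) (B : algType k) (gT : finGroupType)
  (S : {group gT}) (act act' : gT -> B -> B) : Prop :=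
  exists f : B -> B, alg_auto f /\ forall s b, s \in S -> f (act s b) = act' s (f b).

From Pilot Require Import Defs.
From HB Require Import structures.
From mathcomp Require Import all_boot all_order all_algebra all_fingroup.
(* Defs.gact is shadowed by the group action gact of all_fingroup. *)
Import Pilot.Defs.
Set Implicit Arguments. Unset Strict Implicit. Unset Printing Implicit Defensive.
Import GRing.Theory.
Local Open Scope group_scope.

(* Every element r of Ind_S^G(B) is determined by the values r(g) on a set of
   right coset representatives.  Evaluating at g therefore turns an automorphism
   F of Ind_S^G(B) with F(chi_S) = chi_Sg into an S-algebra isomorphism
   B -> B^(g), b |-> F(r_b)(g), where r_b is the element supported on S with
   r_b(1) = b; for g = 1 it recovers the f with F = Ind f.  Conversely an
   isomorphism phi : B -> B^(g) yields the automorphism r |-> phi o r o (g^-1 *_)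
   of Ind_S^G(B), which sends chi_S to chi_Sg. *)

Lemma additive_map0 (U V : zmodType) (f : U -> V) :
  (forall x y, f (x + y)%R = (f x + f y)%R) -> f 0%R = 0%R.
Proof.
move=> fD; have := fD 0%R 0%R; rewrite addr0 => f00.
by apply: (@addrI _ (f 0%R)); rewrite addr0 -f00.
Qed.

Lemma alg_auto0 (k : fieldType) (B : algType k) (f : B -> B) :
  alg_auto f -> f 0%R = 0%R.
Proof. by case=> fD _ _ _ _; exact: additive_map0. Qed.

Lemma inj_surj_bij (T : choiceType) (T' : eqType) (f : T -> T') :
  injective f -> (forall y, exists x, f x = y) -> bijective f.
Proof.
move=> f_inj f_surj.
have ex_pre y : exists x, f x == y by have [x <-] := f_surj y; exists x.
exists (fun y => xchoose (ex_pre y)); last by move=> y; exact/eqP/(xchooseP (ex_pre y)).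
by move=> x; apply: f_inj; exact/eqP/(xchooseP (ex_pre (f x))).
Qed.

Lemma conj_norm_mem (gT : finGroupType) (S : {group gT}) g s :
  g \in 'N(S) -> s \in S -> g * s * g^-1 \in S.
Proof.
move=> gN sS; have -> : g * s * g^-1 = s ^ g^-1 by rewrite conjgE invgK mulgA.
by rewrite memJ_norm ?groupV.
Qed.

Lemma Ind_mapE (T : Type) (gT : finGroupType) (f : T -> T) (r : {ffun gT -> T}) x :
  Ind_map f r x = f (r x).
Proof. exact: ffunE. Qed.

Section InducedAlgebra.

Variables (k : fieldType) (B : algType k) (gT : finGroupType).
Variables (S : {group gT}) (act : gT -> B -> B).
Hypothesis SA : S_algebra S act.

Definition ind_of (b : B) : {ffun gT -> B} :=
  [ffun x => if x \in S then act x b else 0%R].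

Let act_auto s : s \in S -> alg_auto (act s).
Proof. by case: SA => act_auto _ _; exact: act_auto. Qed.

Lemma act0 s : s \in S -> act s 0%R = 0%R.
Proof. by move/act_auto/alg_auto0. Qed.

Lemma act1 s : s \in S -> act s 1%R = 1%R.
Proof. by case/act_auto. Qed.

Lemma inInd_ind_of b : inInd S act (ind_of b).
Proof.
case: SA => _ _ actM s g sS; rewrite !ffunE groupMl //.
by case: ifP => gS; rewrite ?actM ?act0.
Qed.

Lemma ind_of1 b : ind_of b 1 = b.
Proof. by case: SA => _ act_id _; rewrite ffunE group1 act_id. Qed.

Lemma ind_of_inj : injective ind_of.
Proof. by move=> b1 b2 /(congr1 (fun r : {ffun gT -> B} => r 1)); rewrite !ind_of1. Qed.

Lemma ind_ofD x y : ind_of (x + y)%R = [ffun z => (ind_of x z + ind_of y z)%R].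
Proof.
apply/ffunP=> z; rewrite !ffunE.
by case: ifP => [/act_auto[-> _ _ _ _] | _]; rewrite ?addr0.
Qed.

Lemma ind_ofM x y : ind_of (x * y)%R = [ffun z => (ind_of x z * ind_of y z)%R].
Proof.
apply/ffunP=> z; rewrite !ffunE.
by case: ifP => [/act_auto[_ -> _ _ _] | _]; rewrite ?mulr0.
Qed.

Lemma ind_ofZ (c : k) x : ind_of (c *: x)%R = [ffun z => (c *: ind_of x z)%R].
Proof.
apply/ffunP=> z; rewrite !ffunE.
by case: ifP => [/act_auto[_ _ _ -> _] | _]; rewrite ?scaler0.
Qed.

Lemma ind_of_one : ind_of 1%R = chi B S.
Proof. by apply/ffunP=> z; rewrite !ffunE; case: ifP => // /act1. Qed.

Lemma inInd_gact g r : inInd S act r -> inInd S act (gact g r).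
Proof. by move=> Hr s x sS; rewrite !ffunE -mulgA; apply: Hr. Qed.

Lemma gact_ind_of s b : s \in S -> gact s (ind_of b) = ind_of (act s b).
Proof.
case: SA => _ _ actM sS; apply/ffunP=> x; rewrite !ffunE groupMr //.
by case: ifP => // xS; rewrite actM.
Qed.

Lemma inInd_chi : inInd S act (chi B S).
Proof. by rewrite -ind_of_one; exact: inInd_ind_of. Qed.

Local Hint Resolve inInd_ind_of inInd_chi : core.

Lemma inInd_mul r1 r2 : inInd S act r1 -> inInd S act r2 ->
  inInd S act [ffun x => (r1 x * r2 x)%R].
Proof.
by move=> Hr1 Hr2 s g sS; rewrite !ffunE Hr1 // Hr2 //; case: (act_auto sS) => _ ->.
Qed.

Lemma inInd_rcoset r g x : inInd S act r -> x \in S :* g ->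
  r x = act (x * g^-1) (r g).
Proof. by move=> Hr xSg; rewrite -Hr -?mem_rcoset // mulgKV. Qed.

Lemma chi_mul_ind r : inInd S act r ->
  [ffun x => (chi B S x * r x)%R] = ind_of (r 1).
Proof.
move=> Hr; apply/ffunP=> z; rewrite !ffunE.
by case: ifP => zS; rewrite ?mul0r // mul1r -Hr // mulg1.
Qed.

Section AutomorphismAtCoset.

Variables (F : {ffun gT -> B} -> {ffun gT -> B}) (g : gT).
Hypotheses (FG : AutG S act F) (gN : g \in 'N(S)) (Fchi : pi_is S F g).

Definition coset_eval (b : B) : B := F (ind_of b) g.

Let Fin : forall r, inInd S act r -> inInd S act (F r).
Proof. by case: FG. Qed.

Let Finj : forall r1 r2, inInd S act r1 -> inInd S act r2 -> F r1 = F r2 -> r1 = r2.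
Proof. by case: FG => _ []. Qed.

Let FM : forall r1 r2, inInd S act r1 -> inInd S act r2 ->
  F [ffun x => (r1 x * r2 x)%R] = [ffun x => (F r1 x * F r2 x)%R].
Proof. by case: FG => _ [_ [_ [_ []]]]. Qed.

Lemma AutG_chi_mul r : inInd S act r ->
  F [ffun x => (chi B S x * r x)%R] = [ffun x => (chi B (S :* g) x * F r x)%R].
Proof. by move=> Hr; rewrite FM ?Fchi //; exact: inInd_chi. Qed.

Lemma AutG_ind_of b x :
  F (ind_of b) x = if x \in S :* g then act (x * g^-1) (coset_eval b) else 0%R.
Proof.
have -> : ind_of b = [ffun x => (chi B S x * ind_of b x)%R].
  by rewrite chi_mul_ind ?ind_of1.
rewrite AutG_chi_mul // !ffunE; case: ifP => xSg; last by rewrite mul0r.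
by rewrite mul1r (inInd_rcoset (Fin (inInd_ind_of b)) xSg).
Qed.

Lemma coset_eval_inj : injective coset_eval.
Proof.
move=> b1 b2 eq_b; apply/ind_of_inj/Finj => //.
by apply/ffunP=> x; rewrite !AutG_ind_of eq_b.
Qed.

Lemma coset_eval_surj y : exists x, coset_eval x = y.
Proof.
have Fsurj : forall r', inInd S act r' -> exists2 r, inInd S act r & F r = r'.
  by case: FG => _ [_ []].
have [r Hr Fr] := Fsurj _ (inInd_gact g^-1 (inInd_ind_of y)).
have chi_r : [ffun x => (chi B S x * r x)%R] = r.
  apply: Finj => //; first exact: inInd_mul.
  rewrite AutG_chi_mul // Fr; apply/ffunP=> x; rewrite !ffunE mem_rcoset.
  by case: ifP => _; rewrite ?mul1r ?mul0r.
by exists (r 1); rewrite /coset_eval -chi_mul_ind // chi_r Fr ffunE mulgV ind_of1.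
Qed.

Lemma coset_eval_auto : alg_auto coset_eval.
Proof.
case: FG => _ [_ [_ [FD [_ [_ [FZ _]]]]]].
split; rewrite /coset_eval.
- by move=> x y; rewrite ind_ofD FD ?ffunE.
- by move=> x y; rewrite ind_ofM FM ?ffunE.
- by rewrite ind_of_one Fchi ffunE rcoset_refl.
- by move=> c x; rewrite ind_ofZ FZ ?ffunE.
exact: inj_surj_bij coset_eval_inj coset_eval_surj.
Qed.

Lemma coset_eval_twist s b : s \in S ->
  coset_eval (act s b) = twist act g s (coset_eval b).
Proof.
case: FG => _ [_ [_ [_ [_ [_ [_ Fgact]]]]]] sS.
rewrite /coset_eval -gact_ind_of // Fgact // ffunE.
by rewrite (@inInd_rcoset _ g (g * s) (Fin (inInd_ind_of b))) // mem_rcoset conj_norm_mem.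
Qed.

End AutomorphismAtCoset.

Lemma AutG_pi1_Ind F : AutG S act F -> pi_is S F 1 ->
  forall r, inInd S act r -> F r = Ind_map (coset_eval F 1) r.
Proof.
move=> FG Fchi r Hr; have [_ [_ [_ [_ [_ [_ [_ Fgact]]]]]]] := FG; apply/ffunP=> x.
have Hxr := inInd_gact x Hr.
have := congr1 (fun r : {ffun gT -> B} => r 1) (AutG_chi_mul FG Fchi Hxr).
by rewrite chi_mul_ind // Fgact // !ffunE rcoset1 group1 mul1r !mul1g => <-.
Qed.

Lemma Ind_map_chi f : alg_auto f -> Ind_map f (chi B S) = chi B S.
Proof.
move=> f_auto; apply/ffunP=> x; rewrite !ffunE.
by case: ifP => _; [case: f_auto | exact: alg_auto0].
Qed.

Lemma exact_left_S_algebra : exact_left S act.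
Proof.
split=> [f1 f2 _ _ eq_Ind b | F FG].
  have := congr1 (fun r : {ffun gT -> B} => r 1) (eq_Ind _ (inInd_ind_of b)).
  by rewrite !Ind_mapE ind_of1.
split=> [Fchi | [f [f_auto _] FInd]].
  exists (coset_eval F 1); last exact: AutG_pi1_Ind.
  split=> [|s b sS]; first exact: coset_eval_auto FG Fchi.
  by rewrite (coset_eval_twist FG (group1 _)) // /twist mul1g invg1 mulg1.
by rewrite /pi_is rcoset1 FInd // Ind_map_chi.
Qed.

Lemma pi_surjective_twist_iso : pi_surjective S act ->
  forall g, g \in 'N(S) -> S_alg_iso S act (twist act g).
Proof.
move=> pi_surj g gN; have [F FG Fchi] := pi_surj g gN.
exists (coset_eval F g); split; first exact: coset_eval_auto FG Fchi.
exact: coset_eval_twist FG gN.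
Qed.

Section TransportAlongTwist.

Variables (phi : B -> B) (g : gT).
Hypotheses (phi_auto : alg_auto phi) (gN : g \in 'N(S)).
Hypothesis phi_twist : forall s b, s \in S -> phi (act s b) = twist act g s (phi b).

Definition transport (r : {ffun gT -> B}) : {ffun gT -> B} :=
  [ffun x => phi (r (g^-1 * x))].

Let phi_inj : injective phi.
Proof. by case: phi_auto => _ _ _ _ /bij_inj. Qed.

Lemma inInd_transport r : inInd S act r -> inInd S act (transport r).
Proof.
move=> Hr s x sS; rewrite !ffunE.
have -> : g^-1 * (s * x) = g^-1 * s * g * (g^-1 * x) by rewrite -!mulgA mulKVg.
have conjS : g^-1 * s * g \in S by have := conj_norm_mem (groupVr gN) sS; rewrite invgK.
rewrite Hr // phi_twist // /twist.
by have -> : g * (g^-1 * s * g) * g^-1 = s by rewrite !mulgA mulgV mul1g mulgK.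
Qed.

Lemma transport_surj r' : inInd S act r' ->
  exists2 r, inInd S act r & transport r = r'.
Proof.
case: phi_auto => _ _ _ _ [psi _ psiK] Hr'.
exists [ffun y => psi (r' (g * y))]; last by apply/ffunP=> x; rewrite !ffunE mulKVg psiK.
move=> s y sS; rewrite !ffunE; apply: phi_inj.
have -> : g * (s * y) = g * s * g^-1 * (g * y) by rewrite -!mulgA mulKg.
by rewrite psiK phi_twist // psiK Hr' // conj_norm_mem.
Qed.

Lemma transport_chi : pi_is S transport g.
Proof.
case: phi_auto => _ _ phi1 _ _; apply/ffunP=> x; rewrite !ffunE mem_rcoset.
have -> : (g^-1 * x \in S) = (x * g^-1 \in S).
  by rewrite -(memJ_norm (g^-1 * x) (groupVr gN)) conjgE invgK !mulgA mulgV mul1g.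
by case: ifP => _; [exact: phi1 | exact: alg_auto0].
Qed.

Lemma AutG_transport : AutG S act transport.
Proof.
case: phi_auto => phiD phiM phi1 phiZ _.
split; first exact: inInd_transport.
split.
  move=> r1 r2 _ _ eq_r; apply/ffunP=> x.
  by have := congr1 (fun r : {ffun gT -> B} => r (g * x)) eq_r; rewrite !ffunE mulKg => /phi_inj.
split; first exact: transport_surj.
do 4 (split; first by move=> *; apply/ffunP=> x; rewrite !ffunE ?phiD ?phiM ?phi1 ?phiZ).
by move=> h r _; apply/ffunP=> x; rewrite !ffunE mulgA.
Qed.

End TransportAlongTwist.

Lemma twist_iso_pi_surjective :
  (forall g, g \in 'N(S) -> S_alg_iso S act (twist act g)) -> pi_surjective S act.
Proof.
move=> twist_iso g gN; have [phi [phi_auto phi_twist]] := twist_iso g gN.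
by exists (transport phi g); [exact: AutG_transport | exact: transport_chi].
Qed.

End InducedAlgebra.

Theorem proposition3p1 (k : fieldType) (B : algType k) (gT : finGroupType)
  (S : {group gT}) (act : gT -> B -> B) :
  S_Galois S act -> simple_algebra B ->
  exact_left S act /\
  ((exact_left S act /\ pi_surjective S act) <->
   (forall g, g \in 'N(S) -> S_alg_iso S act (twist act g))).
Proof.
case=> _ SA _ _ _ _; have left_exact := exact_left_S_algebra SA.
split=> //; split=> [[_ /(pi_surjective_twist_iso SA)] // | twist_iso].
by split=> //; exact: twist_iso_pi_surjective.
Qed.
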